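(* Let $n\ge1$ be an integer, let $S_n$ be the sum of $n$ independent random variables each uniformly distributed on $[0,1]$, and let $p\ge 1$ be a real number. Then for every integer $k$, $$\Pr\Big(S_n\in \tfrac1p+[k-1,k]\Big)=\frac{1}{p^n\,n!}\,A^{(p)}(n,k).$$
   Context: For real $p\ge1$, integer $n\ge0$ and $0\le j\le n+1$, $A^{(p)}(n,j)=\sum_{r=0}^{j}(-1)^r\binom{n+1}{r}[p(j-r)+1]^{n}$; by convention $A^{(p)}(n,j)=0$ for $j<0$ and for $j>n+1$. Here $\tfrac1p+[k-1,k]$ denotes the interval $[\tfrac1p+k-1,\tfrac1p+k]$. *)

From Stdlib Require Import Reals Lra Lia ZArith List ClassicalEpsilon.
Open Scope R_scope.

(* Riemann integral of f over [a,b]; if f is not Riemann integrable the value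
   is an unspecified real (chosen by epsilon). *)
Definition RInt (f : R -> R) (a b : R) : R :=
  epsilon (inhabits 0%R)
    (fun v => exists pr : Riemann_integrable f a b, RiemannInt pr = v).

Fixpoint cube_int (n : nat) (F : list R -> R) : R :=
  match n with
  | O => F nil
  | S m => RInt (fun t => cube_int m (fun xs => F (t :: xs))) 0 1
  end.

Definition sumR (xs : list R) : R := fold_right Rplus 0 xs.

Definition ind_Icc (a b x : R) : R :=
  if Rle_dec a x then (if Rle_dec x b then 1 else 0) else 0.

(* P(S_n in [a,b]) where S_n = U_1 + ... + U_n, U_i i.i.d. uniform on [0,1]:
   the joint law is Lebesgue measure on [0,1]^n, so this is the integral of
   the indicator of {x in [0,1]^n : a <= x_1+...+x_n <= b}. *)
Definition prob_Sn_in (n : nat) (a b : R) : R :=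
  cube_int n (fun xs => ind_Icc a b (sumR xs)).

Definition Ap (p : R) (n : nat) (j : Z) : R :=
  if ((0 <=? j)%Z && (j <=? Z.of_nat n + 1)%Z)%bool then
    let jn := Z.to_nat j in
    sum_f_R0 (fun r => (-1) ^ r * C (S n) r * (p * INR (jn - r) + 1) ^ n) jn
  else 0.

From Pilot Require Import Defs.
From Stdlib Require Import Reals ZArith Lra Lia ClassicalEpsilon FunctionalExtensionality.
From Coquelicot Require Import Coquelicot.
Open Scope R_scope.

(* Write y_+^m for the truncated power (y^m for y >= 0, 0 otherwise),
   F_m(y) = y_+^m / m!, and Delta g (y) = g y - g (y - 1) for the backward
   difference.  The integral of F_m(y - t) over t in [0,1] is Delta F_{m+1}(y),
   and differencing commutes with this integral; conditioning on the first
   coordinate then gives, by induction on m >= 1,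
        P(a <= S_m <= b) = Delta^m F_m(b) - Delta^m F_m(a)      (a <= b),
   the base case m = 1 needing only that a one-point change does not affect a
   Riemann integral.  For the unit interval [x - 1, x] this is Delta^(m+1) F_m(x),
   which expands binomially into sum_r (-1)^r C(m+1,r) F_m(x - r).  At
   x = 1/p + k with p >= 1 the terms with r > k vanish and the others equal
   (p(k - r) + 1)^m / (p^m m!), which is A^(p)(m,k) / (p^m m!); for k > m + 1
   the interval lies beyond the support of S_m and both sides are 0. *)

Lemma RInt_of_is_RInt (f : R -> R) (a b v : R) :
  is_RInt f a b v -> Defs.RInt f a b = v.
Proof.
  intro H.
  assert (ex : ex_RInt f a b) by (exists v; exact H).
  pose (pr := ex_RInt_Reals_0 f a b ex).
  unfold Defs.RInt.
  destruct (epsilon_spec (inhabits 0)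
     (fun v => exists pr : Riemann_integrable f a b, RiemannInt pr = v)
     (ex_intro _ (RiemannInt pr) (ex_intro _ pr eq_refl))) as [pr' Hpr'].
  rewrite <- Hpr', <- RInt_Reals. apply is_RInt_unique; exact H.
Qed.

(* Rewrite the value of an [is_RInt] fact (stated at type [R], which avoids
   Coquelicot's module-valued coercions). *)
Lemma is_RInt_val (f : R -> R) (a b l l' : R) :
  is_RInt f a b l -> l = l' -> is_RInt f a b l'.
Proof. intros H <-; exact H. Qed.

Lemma is_RInt_zero (a b : R) : is_RInt (fun _ : R => 0) a b 0.
Proof.
  eapply is_RInt_val; [apply is_RInt_const|].
  unfold scal; simpl; unfold mult; simpl. ring.
Qed.

Lemma is_RInt_point_change (f g : R -> R) (a b s l : R) : a <= b ->
  (forall t, a < t < b -> t <> s -> f t = g t) ->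
  is_RInt g a b l -> is_RInt f a b l.
Proof.
  intros Hab Hfg H.
  assert (Hout : (forall t, a < t < b -> f t = g t) -> is_RInt f a b l).
  { intro Hall. apply (is_RInt_ext g); [|exact H].
    intros t Ht. rewrite Rmin_left, Rmax_right in Ht by lra.
    symmetry; apply Hall; exact Ht. }
  destruct (Rlt_dec a s) as [Has|Has]; [destruct (Rlt_dec s b) as [Hsb|Hsb]|].
  - assert (E : ex_RInt g a b) by (exists l; exact H).
    assert (E1 : @ex_RInt R_CompleteNormedModule g a s)
      by (apply (ex_RInt_Chasles_1 _ a s b); [lra|exact E]).
    assert (E2 : @ex_RInt R_CompleteNormedModule g s b)
      by (apply (ex_RInt_Chasles_2 _ a s b); [lra|exact E]).
    eapply is_RInt_val.
    + apply (is_RInt_Chasles _ a s b).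
      * apply (is_RInt_ext g); [|exact (RInt_correct _ _ _ E1)].
        intros t Ht. rewrite Rmin_left, Rmax_right in Ht by lra.
        symmetry; apply Hfg; lra.
      * apply (is_RInt_ext g); [|exact (RInt_correct _ _ _ E2)].
        intros t Ht. rewrite Rmin_left, Rmax_right in Ht by lra.
        symmetry; apply Hfg; lra.
    + rewrite <- (is_RInt_unique g a b l H), <- (RInt_Chasles g a s b E1 E2). reflexivity.
  - apply Hout. intros t Ht. apply Hfg; lra.
  - apply Hout. intros t Ht. apply Hfg; lra.
Qed.

Definition tpow (m : nat) (y : R) : R := if Rle_dec 0 y then y ^ m else 0.

Definition ntpow (m : nat) (y : R) : R := tpow m y / INR (fact m).

Lemma tpow_nonneg (m : nat) (y : R) : 0 <= y -> tpow m y = y ^ m.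
Proof. intro H. unfold tpow. destruct (Rle_dec 0 y); [reflexivity|lra]. Qed.

Lemma tpow_neg (m : nat) (y : R) : y < 0 -> tpow m y = 0.
Proof. intro H. unfold tpow. destruct (Rle_dec 0 y); [lra|reflexivity]. Qed.

Lemma tpow_nonpos (m : nat) (y : R) : y <= 0 -> tpow (S m) y = 0.
Proof.
  intro H. destruct (Rle_dec 0 y).
  - rewrite tpow_nonneg by lra. replace y with 0 by lra. simpl. ring.
  - apply tpow_neg; lra.
Qed.

Lemma is_RInt_power_shift (m : nat) (y u w : R) :
  is_RInt (fun t => (y - t) ^ m) u w (((y - u) ^ S m - (y - w) ^ S m) / INR (S m)).
Proof.
  assert (HS : INR (S m) <> 0) by (apply not_0_INR; lia).
  eapply is_RInt_val.
  - apply (is_RInt_derive (fun t => - (y - t) ^ S m / INR (S m))).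
    + intros x _. auto_derive; auto.
      change (match m with 0%nat => 1 | S _ => INR m + 1 end) with (INR (S m)).
      replace (y + - x) with (y - x) by ring.
      set (z := (y - x) ^ m). field. exact HS.
    + intros x _. apply (ex_derive_continuous (fun t => (y - t) ^ m)). auto_derive. auto.
  - unfold minus, plus, opp; simpl.
    set (z1 := (y - u) ^ m). set (z2 := (y - w) ^ m). field. exact HS.
Qed.

Lemma is_RInt_tpow_shift (m : nat) (y : R) :
  is_RInt (fun t => tpow m (y - t)) 0 1 ((tpow (S m) y - tpow (S m) (y - 1)) / INR (S m)).
Proof.
  assert (HS : INR (S m) <> 0) by (apply not_0_INR; lia).
  destruct (Rle_dec y 0) as [Hy|Hy]; [|destruct (Rle_dec 1 y) as [Hy1|Hy1]].
  - rewrite !tpow_nonpos by lra.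
    eapply is_RInt_val; [apply (is_RInt_point_change _ (fun _ => 0) 0 1 0)|].
    + lra.
    + intros t Ht _. apply tpow_neg; lra.
    + apply is_RInt_zero.
    + field. exact HS.
  - rewrite !tpow_nonneg by lra.
    replace y with (y - 0) at 1 by ring.
    apply (is_RInt_point_change _ (fun t => (y - t) ^ m) 0 1 0);
      [lra| |apply is_RInt_power_shift].
    intros t Ht _. apply tpow_nonneg; lra.
  - rewrite (tpow_nonpos m (y - 1)), tpow_nonneg by lra.
    eapply is_RInt_val; [apply (is_RInt_Chasles _ 0 y 1)|].
    + apply (is_RInt_point_change _ (fun t => (y - t) ^ m) 0 y 0);
        [lra| |apply is_RInt_power_shift].
      intros t Ht _. apply tpow_nonneg; lra.
    + apply (is_RInt_point_change _ (fun _ => 0) y 1 y); [lra| |apply is_RInt_zero].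
      intros t Ht _. apply tpow_neg; lra.
    + change (plus ?u ?v) with (u + v).
      replace (y - y) with 0 by ring. replace (y - 0) with y by ring.
      rewrite pow_i by lia. field. exact HS.
Qed.

Definition bdiff (g : R -> R) (y : R) : R := g y - g (y - 1).

Fixpoint bdiffn (k : nat) (g : R -> R) : R -> R :=
  match k with
  | O => g
  | S k => bdiff (bdiffn k g)
  end.

Lemma bdiffn_bdiff (k : nat) (g : R -> R) : bdiffn k (bdiff g) = bdiffn (S k) g.
Proof. induction k as [|k IH]; simpl; [reflexivity|now rewrite IH]. Qed.

Lemma is_RInt_ntpow_shift (m : nat) (y : R) :
  is_RInt (fun t => ntpow m (y - t)) 0 1 (bdiff (ntpow (S m)) y).
Proof.
  pose proof (is_RInt_scal _ 0 1 (/ INR (fact m)) _ (is_RInt_tpow_shift m y)) as H.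
  apply (is_RInt_ext _ (fun t => ntpow m (y - t))) in H.
  - eapply is_RInt_val; [exact H|].
    change (scal ?u ?v) with (u * v). unfold bdiff, ntpow.
    rewrite fact_simpl, mult_INR.
    field. split; [apply INR_fact_neq_0|apply not_0_INR; lia].
  - intros t _. unfold ntpow, Rdiv. apply Rmult_comm.
Qed.

Lemma is_RInt_bdiffn (k : nat) (g G : R -> R) :
  (forall y, is_RInt (fun t => g (y - t)) 0 1 (G y)) ->
  forall y, is_RInt (fun t => bdiffn k g (y - t)) 0 1 (bdiffn k G y).
Proof.
  intro HG. induction k as [|k IH]; intro y; [exact (HG y)|].
  pose proof (is_RInt_minus _ _ 0 1 _ _ (IH y) (IH (y - 1))) as H.
  apply (is_RInt_ext _ (fun t => bdiffn (S k) g (y - t))) in H.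
  - exact H.
  - intros t _. simpl. unfold bdiff. change (minus ?u ?v) with (u - v).
    replace (y - t - 1) with (y - 1 - t) by ring. reflexivity.
Qed.

Lemma C_n0 (n : nat) : Binomial.C n 0 = 1.
Proof. unfold Binomial.C. rewrite Nat.sub_0_r. simpl. field. apply INR_fact_neq_0. Qed.

Lemma C_nn (n : nat) : Binomial.C n n = 1.
Proof. unfold Binomial.C. rewrite Nat.sub_diag. simpl. field. apply INR_fact_neq_0. Qed.

(* The alternating binomial sum of order k + 1 is a difference of two of order k
   (Pascal's rule); this is the inductive step of the binomial expansion of Delta^k. *)
Lemma alt_binom_step (k : nat) (h : nat -> R) :
  sum_f_R0 (fun r => (-1) ^ r * Binomial.C (S k) r * h r) (S k)
  = sum_f_R0 (fun r => (-1) ^ r * Binomial.C k r * h r) k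
    - sum_f_R0 (fun r => (-1) ^ r * Binomial.C k r * h (S r)) k.
Proof.
  destruct k as [|k].
  - simpl. rewrite !C_n0, C_nn. ring.
  - rewrite (decomp_sum (fun r => (-1) ^ r * Binomial.C (S (S k)) r * h r)),
            (decomp_sum (fun r => (-1) ^ r * Binomial.C (S k) r * h r)) by lia.
    simpl pred.
    rewrite (tech5 (fun i => (-1) ^ S i * Binomial.C (S (S k)) (S i) * h (S i))),
            (tech5 (fun r => (-1) ^ r * Binomial.C (S k) r * h (S r))).
    assert (Hpascal :
      sum_f_R0 (fun i => (-1) ^ S i * Binomial.C (S (S k)) (S i) * h (S i)) k
      = sum_f_R0 (fun i => (-1) ^ S i * Binomial.C (S k) (S i) * h (S i)) k
        - sum_f_R0 (fun i => (-1) ^ i * Binomial.C (S k) i * h (S i)) k).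
    { rewrite <- minus_sum. apply sum_eq. intros i Hi.
      rewrite <- pascal by lia. simpl pow. ring. }
    rewrite Hpascal, !C_n0, !C_nn. simpl pow. ring.
Qed.

Lemma bdiffn_expand (k : nat) (g : R -> R) (x : R) :
  bdiffn k g x = sum_f_R0 (fun r => (-1) ^ r * Binomial.C k r * g (x - INR r)) k.
Proof.
  revert x. induction k as [|k IH]; intro x.
  - simpl. rewrite C_n0. replace (x - 0) with x by ring. ring.
  - simpl bdiffn. unfold bdiff. rewrite !IH, alt_binom_step.
    f_equal. apply sum_eq. intros r _. rewrite S_INR.
    replace (x - (INR r + 1)) with (x - 1 - INR r) by ring. reflexivity.
Qed.

Lemma ind_Icc_shift (a b t s : R) : ind_Icc a b (t + s) = ind_Icc (a - t) (b - t) s.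
Proof.
  unfold ind_Icc.
  destruct (Rle_dec a (t + s)), (Rle_dec (a - t) s); try lra;
  destruct (Rle_dec (t + s) b), (Rle_dec s (b - t)); lra.
Qed.

Lemma prob_Sn_in_S (m : nat) (a b : R) :
  prob_Sn_in (S m) a b = Defs.RInt (fun t => prob_Sn_in m (a - t) (b - t)) 0 1.
Proof.
  unfold prob_Sn_in. simpl cube_int. f_equal.
  apply functional_extensionality; intro t. f_equal.
  apply functional_extensionality; intro xs. apply ind_Icc_shift.
Qed.

(* S_m <= m, so intervals beyond m have probability 0. *)
Lemma prob_Sn_in_beyond (m : nat) (a b : R) : INR m < a -> prob_Sn_in m a b = 0.
Proof.
  revert a b. induction m as [|m IH]; intros a b Ha.
  - unfold prob_Sn_in, ind_Icc. simpl in *. destruct (Rle_dec a 0); [lra|reflexivity].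
  - rewrite prob_Sn_in_S. apply RInt_of_is_RInt.
    apply (is_RInt_point_change _ (fun _ => 0) 0 1 0); [lra| |apply is_RInt_zero].
    intros t Ht _. apply IH. rewrite S_INR in Ha. lra.
Qed.

Lemma prob_Sn_in_bdiffn (m : nat) (a b : R) : (1 <= m)%nat -> a <= b ->
  prob_Sn_in m a b = bdiffn m (ntpow m) b - bdiffn m (ntpow m) a.
Proof.
  intro Hm. revert a b. induction m as [|m IH]; intros a b Hab; [lia|].
  rewrite prob_Sn_in_S. apply RInt_of_is_RInt.
  destruct m as [|m].
  - apply (is_RInt_point_change _ (fun t => ntpow 0 (b - t) - ntpow 0 (a - t)) 0 1 a);
      [lra| |apply (is_RInt_minus _ _ 0 1 _ _ (is_RInt_ntpow_shift 0 b)
                                            (is_RInt_ntpow_shift 0 a))].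
    intros t _ Hta. unfold prob_Sn_in, ntpow, tpow, ind_Icc. simpl.
    destruct (Rle_dec (a - t) 0), (Rle_dec 0 (b - t)), (Rle_dec 0 (b - t)),
      (Rle_dec 0 (a - t)); lra.
  - apply (is_RInt_point_change _
      (fun t => bdiffn (S m) (ntpow (S m)) (b - t) - bdiffn (S m) (ntpow (S m)) (a - t)) 0 1 0);
      [lra| |].
    + intros t _ _. apply IH; [lia|lra].
    + rewrite <- (bdiffn_bdiff (S m)).
      exact (is_RInt_minus _ _ 0 1 _ _
        (is_RInt_bdiffn (S m) _ _ (is_RInt_ntpow_shift (S m)) b)
        (is_RInt_bdiffn (S m) _ _ (is_RInt_ntpow_shift (S m)) a)).
Qed.

Lemma Ap_outside (p : R) (n : nat) (k : Z) :
  (k < 0 \/ Z.of_nat n + 1 < k)%Z -> Ap p n k = 0.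
Proof.
  intro Hk. unfold Ap.
  replace ((0 <=? k)%Z && (k <=? Z.of_nat n + 1)%Z)%bool with false; [reflexivity|].
  symmetry. apply Bool.andb_false_iff.
  destruct Hk; [left|right]; apply Z.leb_gt; lia.
Qed.

Lemma Ap_inside (p : R) (n : nat) (k : Z) : (0 <= k <= Z.of_nat n + 1)%Z ->
  Ap p n k = sum_f_R0 (fun r => (-1) ^ r * Binomial.C (S n) r
                                 * (p * INR (Z.to_nat k - r) + 1) ^ n) (Z.to_nat k).
Proof.
  intro Hk. unfold Ap.
  replace ((0 <=? k)%Z && (k <=? Z.of_nat n + 1)%Z)%bool with true; [reflexivity|].
  symmetry. apply andb_true_intro. split; apply Z.leb_le; lia.
Qed.

Lemma sum_f_R0_trunc (f : nat -> R) (M N : nat) : (M <= N)%nat ->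
  (forall r, (M < r <= N)%nat -> f r = 0) -> sum_f_R0 f N = sum_f_R0 f M.
Proof.
  intros HMN H. induction N as [|N IH].
  - replace M with 0%nat by lia. reflexivity.
  - destruct (Nat.eq_dec M (S N)) as [->|Hne]; [reflexivity|].
    rewrite tech5, IH, (H (S N)) by (lia || (intros; apply H; lia)). ring.
Qed.

Lemma ntpow_lattice (n : nat) (p : R) (j r : nat) : 0 < p -> (r <= j)%nat ->
  ntpow n (1 / p + INR j - INR r) = / (p ^ n * INR (fact n)) * (p * INR (j - r) + 1) ^ n.
Proof.
  intros Hp Hrj.
  assert (INR r <= INR j) by (apply le_INR; exact Hrj).
  assert (0 < 1 / p) by (apply Rdiv_lt_0_compat; lra).
  unfold ntpow. rewrite tpow_nonneg by lra. rewrite minus_INR by exact Hrj.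
  replace (1 / p + INR j - INR r) with ((p * (INR j - INR r) + 1) * / p) by (field; lra).
  rewrite Rpow_mult_distr, pow_inv.
  field. split; [apply INR_fact_neq_0|apply pow_nonzero; lra].
Qed.

Lemma bdiffn_ntpow_Ap (n : nat) (p : R) (k : Z) :
  (1 <= n)%nat -> 1 <= p -> (k <= Z.of_nat n + 1)%Z ->
  bdiffn (S n) (ntpow n) (1 / p + IZR k) = / (p ^ n * INR (fact n)) * Ap p n k.
Proof.
  intros Hn Hp Hk.
  assert (Hinvp : 0 < 1 / p <= 1).
  { split; [apply Rdiv_lt_0_compat; lra|].
    apply (Rmult_le_reg_r p); [lra|]. field_simplify; lra. }
  rewrite bdiffn_expand.
  destruct n as [|n]; [lia|].
  destruct (Z_lt_le_dec k 0) as [Hneg|Hpos].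
  - rewrite Ap_outside, Rmult_0_r by lia.
    rewrite (sum_eq _ (fun _ => 0)), sum_cte; [ring|].
    intros r _. unfold ntpow. rewrite tpow_nonpos; [unfold Rdiv; ring|].
    assert (IZR k <= -1) by (apply (IZR_le k (-1)); lia).
    pose proof (pos_INR r). lra.
  - set (j := Z.to_nat k).
    assert (Hkj : IZR k = INR j) by (unfold j; rewrite INR_IZR_INZ, Z2Nat.id by lia; reflexivity).
    rewrite Ap_inside by lia. fold j. rewrite Hkj.
    rewrite (sum_f_R0_trunc _ j (S (S n))).
    + rewrite scal_sum. apply sum_eq. intros r Hr.
      rewrite ntpow_lattice by (lra || lia). ring.
    + unfold j. lia.
    + intros r Hr. unfold ntpow. rewrite tpow_nonpos; [unfold Rdiv; ring|].
      assert (INR (S j) <= INR r) by (apply le_INR; lia).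
      rewrite S_INR in *. lra.
Qed.

Theorem corollary1 (n : nat) (p : R) (k : Z) :
  (1 <= n)%nat -> 1 <= p ->
  prob_Sn_in n (1 / p + IZR k - 1) (1 / p + IZR k)
  = / (p ^ n * INR (fact n)) * Ap p n k.
Proof.
  intros Hn Hp.
  destruct (Z_lt_le_dec (Z.of_nat n + 1) k) as [Hbig|Hle].
  -
    rewrite Ap_outside by lia. rewrite prob_Sn_in_beyond; [ring|].
    assert (IZR (Z.of_nat n) + 2 <= IZR k) by (rewrite <- plus_IZR; apply IZR_le; lia).
    assert (0 < 1 / p) by (apply Rdiv_lt_0_compat; lra).
    rewrite INR_IZR_INZ. lra.
  -
    rewrite prob_Sn_in_bdiffn by (lia || lra).
    exact (bdiffn_ntpow_Ap n p k Hn Hp Hle).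
Qed.
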